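(* A family $\mathcal{F}\subseteq 2^{[n]}$ is s-extremal if and only if there exists a Sperner family $\mathcal{S}\subseteq 2^{[n]}$ such that $\mathcal{F}$ is $\mathcal{S}$-extremal.
   Context: $[n]=\{1,\dots,n\}$. A Sperner family is a family of sets none of which is contained in another. $\mathcal{F}$ shatters $S$ if $\{F\cap S:F\in\mathcal{F}\}=2^S$; $\mathrm{Sh}(\mathcal{F})$ is the family of shattered sets; $\mathcal{F}$ is s-extremal if $|\mathrm{Sh}(\mathcal{F})|=|\mathcal{F}|$. $\mathcal{H}(\mathcal{S})=\{F\subseteq[n]: \text{no } S\in\mathcal{S} \text{ satisfies } S\subseteq F\}$. For a Sperner family $\mathcal{S}$, a family $\mathcal{F}\subseteq 2^{[n]}$ is called $\mathcal{S}$-extremal if $\mathcal{F}$ shatters no element of $\mathcal{S}$ and $|\mathcal{F}|=|\mathcal{H}(\mathcal{S})|$. *)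

From mathcomp Require Import all_boot.
Set Implicit Arguments. Unset Strict Implicit. Unset Printing Implicit Defensive.

Definition sperner n (S : {set {set 'I_n}}) : bool :=
  [forall A in S, forall B in S, (A \subset B) ==> (A == B)].

Definition shatters n (F : {set {set 'I_n}}) (S : {set 'I_n}) : bool :=
  [set G :&: S | G in F] == powerset S.

Definition Sh n (F : {set {set 'I_n}}) : {set {set 'I_n}} :=
  [set S | shatters F S].

Definition s_extremal n (F : {set {set 'I_n}}) : bool := #|Sh F| == #|F|.

Definition Hfam n (S : {set {set 'I_n}}) : {set {set 'I_n}} :=
  [set G : {set 'I_n} | [forall A in S, ~~ (A \subset G)]].

Definition S_extremal n (S F : {set {set 'I_n}}) : bool :=
  [forall A in S, ~~ shatters F A] && (#|F| == #|Hfam S|).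

From mathcomp Require Import all_boot.
Set Implicit Arguments. Unset Strict Implicit. Unset Printing Implicit Defensive.

(* Sh F is closed under subsets, and Pajor's inequality |F| <= |Sh F| holds
   (split F along a point x; Sh F contains the sets shattered by either half and,
   disjointly, x + S for every S shattered by both).  A down-closed family D is
   H(S) for the Sperner family S of minimal sets outside D; for D = Sh F this S is
   not shattered by F, so s-extremality gives S-extremality.  Conversely, if F
   shatters no member of S then Sh F is contained in H(S), whence
   |Sh F| <= |H(S)| = |F| <= |Sh F|. *)

Section Shattering.
Variable n : nat.
Implicit Types (F : {set {set 'I_n}}) (S T U G : {set 'I_n}) (x : 'I_n).

Lemma shattersP F S :
  reflect (forall U, U \subset S -> exists2 G, G \in F & G :&: S = U) (shatters F S).
Proof.
rewrite /shatters eqEsubset.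
have -> : [set G :&: S | G in F] \subset powerset S.
  by apply/subsetP => _ /imsetP[G _ ->]; rewrite inE subsetIr.
apply: (iffP subsetP) => [shF U sUS | shF U].
  have /shF/imsetP[G GF ->] : U \in powerset S by rewrite inE.
  by exists G.
by rewrite inE => /shF[G GF <-]; apply: imset_f.
Qed.

Lemma shatters_subset F S T : T \subset S -> shatters F S -> shatters F T.
Proof.
move=> sTS /shattersP shF; apply/shattersP => U sUT.
have [G GF GS] := shF U (subset_trans sUT sTS); exists G => //.
by rewrite -(setIidPr sTS) setIA GS; apply/setIidPl.
Qed.

Lemma ShS F1 F2 : F1 \subset F2 -> Sh F1 \subset Sh F2.
Proof.
move=> sF12; apply/subsetP => S; rewrite !inE => /shattersP shF.
apply/shattersP => U /shF[G GF GS].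
by exists G; first exact: (subsetP sF12).
Qed.

Lemma shatters0 F : F != set0 -> shatters F set0.
Proof.
case/set0Pn => G GF; apply/shattersP => U; rewrite subset0 => /eqP->.
by exists G; rewrite ?setI0.
Qed.

Lemma shatters_constant_notin F S x b :
  {in F, forall G, (x \in G) = b} -> shatters F S -> x \notin S.
Proof.
move=> constF /shattersP shF; apply/negP => xS.
have [G1 G1F G1S] := shF S (subxx S).
have [G2 G2F G2S] := shF (S :\ x) (subD1set S x).
have /setP/(_ x) := G1S; have /setP/(_ x) := G2S.
by rewrite !inE xS eqxx !andbT constF // constF // => ->.
Qed.

Lemma shatters_setU1 F S x :
  shatters [set G in F | x \notin G] S -> shatters [set G in F | x \in G] S ->
  shatters F (x |: S).
Proof.
move=> /shattersP sh0 /shattersP sh1; apply/shattersP => U sUxS.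
have sUS : U :\ x \subset S by rewrite subDset.
have [xU | xNU] := boolP (x \in U).
  have [G] := sh1 _ sUS; rewrite inE => /andP[GF xG] GS; exists G => //.
  apply/setP => y; move/setP/(_ y): GS; rewrite !inE.
  by case: eqVneq => [-> | _ ->] //; rewrite xG xU.
have [G] := sh0 _ sUS; rewrite inE => /andP[GF xNG] GS; exists G => //.
apply/setP => y; move/setP/(_ y): GS; rewrite !inE.
by case: eqVneq => [-> | _ ->] //; rewrite (negbTE xNG) (negbTE xNU).
Qed.

Lemma card_Sh_split F x :
  #|Sh [set G in F | x \notin G]| + #|Sh [set G in F | x \in G]| <= #|Sh F|.
Proof.
set F0 := [set G in F | x \notin G]; set F1 := [set G in F | x \in G].
set D := Sh F0 :|: Sh F1; set J := [set x |: S | S in Sh F0 :&: Sh F1].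
have notinD S : S \in D -> x \notin S.
  rewrite !inE => /orP[].
    by apply: (shatters_constant_notin (b := false)) => G; rewrite inE => /andP[_ /negbTE].
  by apply: (shatters_constant_notin (b := true)) => G; rewrite inE => /andP[].
have cardJ : #|J| = #|Sh F0 :&: Sh F1|.
  apply: card_in_imset => S T /setIP[S0 _] /setIP[T0 _] eqST.
  have xNS : x \notin S by apply: notinD; rewrite inE S0.
  have xNT : x \notin T by apply: notinD; rewrite inE T0.
  by rewrite -(setU1K xNS) -(setU1K xNT) eqST.
have disjDJ : D :&: J = set0.
  apply/setP => S; rewrite in_set0; apply/negP => /setIP[/notinD xNS /imsetP[T _ eS]].
  by rewrite eS setU11 in xNS.
have sDJ : D :|: J \subset Sh F.
  rewrite /D !subUset -andbA; apply/and3P; split.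
  - by apply: ShS; rewrite /F0 setIdE subsetIl.
  - by apply: ShS; rewrite /F1 setIdE subsetIl.
  - apply/subsetP => _ /imsetP[S /setIP[sh0 sh1] ->].
    by move: sh0 sh1; rewrite !inE; apply: shatters_setU1.
apply: leq_trans (subset_leq_card sDJ).
by rewrite -cardsUI -cardJ -(cardsUI D J) disjDJ cards0 addn0.
Qed.

Lemma separating_point F : 1 < #|F| ->
  exists x, [set G in F | x \notin G] != set0 /\ [set G in F | x \in G] != set0.
Proof.
case/card_gt1P => G1 [G2 [G1F G2F neqG12]].
have [x /= xG12 | eqG12] := pickP (fun x => (x \in G1) != (x \in G2)); last first.
  by case/eqP: neqG12; apply/setP => x; apply/eqP/negbFE/eqG12.
exists x; split; apply/set0Pn; case: (boolP (x \in G1)) xG12 => xG1;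
  rewrite ?negbK => xG2; first [by exists G1; rewrite inE G1F | by exists G2; rewrite inE G2F].
Qed.

Lemma card_le_Sh F : #|F| <= #|Sh F|.
Proof.
have [m] := ubnP #|F|; elim: m F => // m IHm F ltFm.
have [leF1 | /separating_point[x [nzF0 nzF1]]] := leqP #|F| 1.
  have [-> | nzF] := eqVneq F set0; first by rewrite cards0.
  by apply: leq_trans leF1 _; apply/card_gt0P; exists set0; rewrite inE shatters0.
set F0 := [set G in F | x \notin G] in nzF0 *; set F1 := [set G in F | x \in G] in nzF1 *.
have cardF : #|F0| + #|F1| = #|F|.
  rewrite -(cardsID [set G : {set 'I_n} | x \in G] F) addnC.
  by congr (_ + _); apply: eq_card => G; rewrite !inE andbC.
have ltF0 : #|F0| < m.
  by rewrite -ltnS (leq_trans _ ltFm) // ltnS -cardF -{1}[#|F0|]addn0 ltn_add2l card_gt0.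
have ltF1 : #|F1| < m.
  by rewrite -ltnS (leq_trans _ ltFm) // ltnS -cardF -{1}[#|F1|]add0n ltn_add2r card_gt0.
by rewrite -cardF (leq_trans _ (card_Sh_split F x)) // leq_add ?IHm.
Qed.

Lemma Sh_subset_Hfam F (S : {set {set 'I_n}}) :
  [forall A in S, ~~ shatters F A] -> Sh F \subset Hfam S.
Proof.
move/forall_inP => noShS; apply/subsetP => G; rewrite !inE => shG.
apply/forall_inP => A /noShS; apply: contra => sAG; exact: shatters_subset shG.
Qed.

End Shattering.

Section MinimalSets.
Variable n : nat.
Implicit Types (Q : pred {set 'I_n}) (A B G : {set 'I_n}).

Lemma sperner_minset Q : sperner [set A | minset Q A].
Proof.
apply/forall_inP => A; rewrite inE => minA; apply/forall_inP => B; rewrite inE => minB.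
by apply/implyP => sAB; apply/eqP; apply: minsetinf minB (minsetp minA) sAB.
Qed.

Lemma Hfam_minset_predC Q :
  (forall A B, B \subset A -> Q A -> Q B) ->
  Hfam [set A | minset (predC Q) A] = [set A | Q A].
Proof.
move=> downQ; apply/setP => G; rewrite !inE; apply/forall_inP/idP => [noMinG | QG A].
  apply/negPn/negP => nQG; have [A minA sAG] := minset_exists (P := predC Q) nQG.
  by have := noMinG A; rewrite inE minA sAG => /(_ isT).
rewrite inE => /minsetp /=; apply: contra => sAG; exact: downQ sAG QG.
Qed.

End MinimalSets.

Theorem proposition13 (n : nat) (F : {set {set 'I_n}}) :
  s_extremal F <-> exists S : {set {set 'I_n}}, sperner S /\ S_extremal S F.
Proof.
split => [/eqP cardShF | [S [_ /andP[noShS /eqP cardF]]]].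
- exists [set A | minset (predC (shatters F)) A].
  split; first exact: sperner_minset.
  apply/andP; split; first by apply/forall_inP => A; rewrite inE => /minsetp.
  by rewrite Hfam_minset_predC; [exact/eqP | exact: shatters_subset].
- apply/eqP/eqP; rewrite eqn_leq card_le_Sh andbT cardF.
  exact/subset_leq_card/Sh_subset_Hfam.
Qed.
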